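(* In the setting of the context, suppose that $\mathcal{Q}$ satisfies Condition I (for all $i\in\{1,\dots,d\}$ and all $Z\in\mathcal{Q}$, $ZR^i\in L^1$), that $\Pi^\rho_0=\{\mathbf{0}\}$, and that $\tilde{\mathcal{Q}}_{\max}\ne\emptyset$. Then the following are equivalent: (a) the market does not admit $\rho$-arbitrage; (b) $\tilde{\mathcal{Q}}\cap\mathcal{P}\ne\emptyset$ for some nonempty $\tilde{\mathcal{Q}}\subset\mathcal{Q}$ satisfying Conditions POS, MIX and INT; (c) $\tilde{\mathcal{Q}}\cap\mathcal{P}\ne\emptyset$ for all nonempty $\tilde{\mathcal{Q}}\subset\mathcal{Q}$ satisfying Conditions POS, MIX and INT.
   Context: Let $(\Omega,\mathcal{F},\mathbb{P})$ be a probability space and a market: riskless asset $S^0_0=1$, $S^0_1=1+r$, $r>-1$; risky assets $S^1,\dots,S^d$ with constants $S^i_0>0$ and real-valued $\mathcal{F}$-measurable $S^i_1$; returns $R^i:=(S^i_1-S^i_0)/S^i_0$. Standing assumptions: nonredundancy (if $\theta\in\mathbb{R}^{1+d}$ with $\sum_{i=0}^d\theta^iS^i_t=0$ a.s. for $t\in\{0,1\}$ then $\theta=0$), $R^i\in L^1$, $\mathbb{E}[R^i]\ne r$ for some $i$. Excess return of $\pi\in\mathbb{R}^d$: $X_\pi:=\pi\cdot(R-r\mathbf{1})$; $\Pi_0:=\{\pi:\mathbb{E}[X_\pi]=0\}$; $\Pi^\rho_0$ is the set of $\pi\in\Pi_0$ with $\rho(X_\pi)<\infty$ and $\rho(X_\pi)\le\rho(X_{\pi'})$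 for all $\pi'\in\Pi_0$. $L$ is a Riesz space with $L^\infty\subset L\subset L^1$ containing all $X_\pi$. $\mathcal{D}:=\{Z\in L^1:Z\ge0 \text{ a.s.},\mathbb{E}[Z]=1\}$; $\mathcal{Q}\subset\mathcal{D}$ is convex with $1\in\mathcal{Q}$ and $\rho(X)=\sup_{Z\in\mathcal{Q}}\mathbb{E}[-ZX]$ on $L$, with $\mathbb{E}[-ZX]:=\mathbb{E}[ZX^-]-\mathbb{E}[ZX^+]$ and $\mathbb{E}[-ZX]=\infty$ if $\mathbb{E}[ZX^-]=\infty$. $\mathcal{M}:=\{Z\in\mathcal{D}:\mathbb{E}[Z(R^i-r)]=0\ \forall i\}$, $\mathcal{P}:=\{Z\in\mathcal{M}:Z>0 \text{ a.s.}\}$. For $\tilde{\mathcal{Q}}\subset\mathcal{Q}$: POS: every $\tilde Z\in\tilde{\mathcal{Q}}$ satisfies $\tilde Z>0$ a.s.; MIX: $\lambda Z+(1-\lambda)\tilde Z\in\tilde{\mathcal{Q}}$ for all $Z\in\mathcal{Q}$, $\tilde Z\in\tilde{\mathcal{Q}}$, $\lambda\in(0,1)$; INT: for every $\tilde Z\in\tilde{\mathcal{Q}}$ there is an $L^\infty$-dense subset $\mathcal{E}$ of $\mathcal{D}\cap L^\infty$ such that for every $Z\in\mathcal{E}$ there is $\lambda\in(0,1)$ with $\lambda Z+(1-\lambda)\tilde Z\in\mathcal{Q}$. $\tilde{\mathcal{Q}}_{\max}$ is the set of $\tilde Z\in\mathcal{Q}$ with $\tilde Z>0$ a.s. for which there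 is an $L^\infty$-dense subset $\mathcal{E}$ of $\mathcal{D}\cap L^\infty$ such that for every $Z\in\mathcal{E}$ there is $\lambda\in(0,1)$ with $\lambda Z+(1-\lambda)\tilde Z\in\mathcal{Q}$. Strictly $\rho$-preferred, $\rho$-efficient: $\pi$ is $\rho$-efficient if $\mathbb{E}[X_\pi]\ge0$ and there is no $\pi'$ with $\mathbb{E}[X_{\pi'}]\ge\mathbb{E}[X_\pi]$, $\rho(X_{\pi'})\le\rho(X_\pi)$, one inequality strict. $\rho$-arbitrage: no $\rho$-efficient portfolio exists. *)

From mathcomp Require Import all_boot all_order all_algebra.
From mathcomp Require Import all_classical all_reals all_analysis.
Set Implicit Arguments. Unset Strict Implicit. Unset Printing Implicit Defensive.
Import Order.TTheory GRing.Theory Num.Theory.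
Local Open Scope classical_set_scope.
Local Open Scope ring_scope.

Section Market.
Context {d0 : measure_display} {T : measurableType d0} {R : realType}.
Variable (P : probability T R).
Variable (d : nat).

Definition ret (S0 : 'I_d -> R) (S1 : 'I_d -> T -> R) (i : 'I_d) (x : T) : R :=
  (S1 i x - S0 i) / S0 i.

Definition excess (r : R) (Ret : 'I_d -> T -> R) (pi : 'I_d -> R) (x : T) : R :=
  \sum_(i < d) pi i * (Ret i x - r).

Definition nonredundant (r : R) (S0 : 'I_d -> R) (S1 : 'I_d -> T -> R) : Prop :=
  forall (theta0 : R) (theta : 'I_d -> R),
    theta0 * 1 + \sum_(i < d) theta i * S0 i = 0 ->
    {ae P, forall x, theta0 * (1 + r) + \sum_(i < d) theta i * S1 i x = 0} ->
    theta0 = 0 /\ forall i, theta i = 0.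

Definition Dset (Z : T -> R) : Prop :=
  P.-integrable setT (EFin \o Z) /\ {ae P, forall x, 0 <= Z x} /\
  (\int[P]_x (Z x)%:E = 1)%E.

Definition EmZ (Z X : T -> R) : \bar R :=
  let a := (\int[P]_x (Z x * Num.max (- X x) 0)%:E)%E in
  let b := (\int[P]_x (Z x * Num.max (X x) 0)%:E)%E in
  if a == +oo%E then +oo%E else (a - b)%E.

Definition rho (Q : set (T -> R)) (X : T -> R) : \bar R :=
  ereal_sup [set EmZ Z X | Z in Q].

Definition Mset (r : R) (Ret : 'I_d -> T -> R) (Z : T -> R) : Prop :=
  Dset Z /\ forall i : 'I_d,
    P.-integrable setT (fun x => (Z x * (Ret i x - r))%:E) /\
    (\int[P]_x (Z x * (Ret i x - r))%:E = 0)%E.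

Definition Pset (r : R) (Ret : 'I_d -> T -> R) (Z : T -> R) : Prop :=
  Mset r Ret Z /\ {ae P, forall x, 0 < Z x}.

Definition ess_bounded (Z : T -> R) : Prop :=
  exists M : R, {ae P, forall x, `|Z x| <= M}.

Definition Linf_dense (E : set (T -> R)) : Prop :=
  E `<=` [set Z | Dset Z /\ ess_bounded Z] /\
  forall Z, Dset Z -> ess_bounded Z -> forall eps : R, 0 < eps ->
    exists2 Z', E Z' & {ae P, forall x, `|Z x - Z' x| <= eps}.

Definition mix (l : R) (Z Z' : T -> R) : T -> R :=
  fun x => l * Z x + (1 - l) * Z' x.

Definition condPOS (Qt : set (T -> R)) : Prop :=
  forall Zt, Qt Zt -> {ae P, forall x, 0 < Zt x}.

Definition condMIX (Q Qt : set (T -> R)) : Prop :=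
  forall Z Zt (l : R), Q Z -> Qt Zt -> 0 < l < 1 -> Qt (mix l Z Zt).

Definition condINT (Q Qt : set (T -> R)) : Prop :=
  forall Zt, Qt Zt -> exists E, Linf_dense E /\
    forall Z, E Z -> exists l : R, 0 < l < 1 /\ Q (mix l Z Zt).

Definition Qmax (Q : set (T -> R)) : set (T -> R) :=
  [set Zt | Q Zt /\ {ae P, forall x, 0 < Zt x} /\
    exists E, Linf_dense E /\
      forall Z, E Z -> exists l : R, 0 < l < 1 /\ Q (mix l Z Zt)].

Definition condI (Ret : 'I_d -> T -> R) (Q : set (T -> R)) : Prop :=
  forall (i : 'I_d) Z, Q Z -> P.-integrable setT (fun x => (Z x * Ret i x)%:E).

Definition Pi0 (r : R) (Ret : 'I_d -> T -> R) (pi : 'I_d -> R) : Prop :=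
  (\int[P]_x (excess r Ret pi x)%:E = 0)%E.

Definition Pirho0 (Q : set (T -> R)) (r : R) (Ret : 'I_d -> T -> R)
    (pi : 'I_d -> R) : Prop :=
  Pi0 r Ret pi /\ (rho Q (excess r Ret pi) < +oo)%E /\
  forall pi', Pi0 r Ret pi' -> (rho Q (excess r Ret pi) <= rho Q (excess r Ret pi'))%E.

Definition rho_efficient (Q : set (T -> R)) (r : R) (Ret : 'I_d -> T -> R)
    (pi : 'I_d -> R) : Prop :=
  (0 <= \int[P]_x (excess r Ret pi x)%:E)%E /\
  ~ exists pi' : 'I_d -> R,
      let m := (\int[P]_x (excess r Ret pi x)%:E)%E in
      let m' := (\int[P]_x (excess r Ret pi' x)%:E)%E in
      let p := rho Q (excess r Ret pi) in
      let p' := rho Q (excess r Ret pi') in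
      (m <= m')%E /\ (p' <= p)%E /\ ((m < m')%E \/ (p' < p)%E).

Definition rho_arbitrage (Q : set (T -> R)) (r : R) (Ret : 'I_d -> T -> R) : Prop :=
  ~ exists pi, rho_efficient Q r Ret pi.

End Market.

(* (c) => (b) because Q~max itself satisfies POS, MIX and INT.
   (b) => (a): for Z~ in Q~ /\ P the zero portfolio is rho-efficient.  A portfolio pi
   dominating it satisfies E[Z X_pi] >= 0 for every Z in Q and E[X_pi] > 0, while
   E[Z~ X_pi] = 0.  By INT, Z~ can be mixed into Q with bounded densities arbitrarily
   close to 1_{X_pi < 0} / P(X_pi < 0), which forces X_pi >= 0 a.s.; as Z~ > 0 this
   gives X_pi = 0 a.s., contradicting E[X_pi] > 0.
   (a) => (c): if Q~ /\ P is empty, the convex set of vectors (E[Z (R^i - r)])_i,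
   Z in Q~, misses 0 in R^d, so some pi <> 0 separates it from 0; by MIX,
   E[Z X_pi] >= 0 for all Z in Q, hence rho(X_pi) <= 0.  If E[X_pi] > 0, adding pi to
   an efficient portfolio would improve it; otherwise pi lies in Pi^rho_0 = {0}.
   The separation theorem in R^d is obtained from the minimal-norm point of the convex
   hull of finitely many points and the compactness of the unit sphere. *)

From mathcomp Require Import all_boot all_order all_algebra.
From mathcomp Require Import all_classical all_reals all_analysis.
From mathcomp Require Import measurable_realfun.
From mathcomp Require Import ring lra.
Set Implicit Arguments. Unset Strict Implicit. Unset Printing Implicit Defensive.
Import Order.TTheory GRing.Theory Num.Theory.
Import numFieldNormedType.Exports.
Local Open Scope classical_set_scope.
Local Open Scope ring_scope.

Section Convex.
Context {R : numFieldType} {M : lmodType R}.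

Lemma convex_setP (C : set M) :
  convex_set C <->
  forall x y (t : R), C x -> C y -> 0 <= t <= 1 -> C (t *: x + (1 - t) *: y).
Proof.
split=> [cC x y t Cx Cy /andP[t0 t1]|cC x y l /set_mem Cx /set_mem Cy].
  by have := cC x y (@Itv01 _ _ t0 t1) (mem_set Cx) (mem_set Cy); rewrite inE.
by apply/mem_set; apply: cC Cx Cy _; rewrite ge0 le1.
Qed.

Lemma convex_set_comb (C : set M) m (l : 'I_m.+1 -> R) (c : 'I_m.+1 -> M) :
  convex_set C -> (forall i, 0 <= l i) -> \sum_i l i = 1 -> (forall i, C (c i)) ->
  C (\sum_i l i *: c i).
Proof.
move=> /convex_setP cC; elim: m l c => [|m IH] l c l0 l1 Cc.
  by move: l1; rewrite !big_ord1 => ->; rewrite scale1r.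
rewrite big_ord_recr /=; rewrite big_ord_recr /= in l1.
set s := \sum_(i < m.+1) _ in l1.
have s0 : 0 <= s by apply: sumr_ge0.
have lmax : l ord_max = 1 - s by rewrite -l1 addrC addrK.
have [s00|sn0] := eqVneq s 0.
  rewrite big1 ?add0r => [|i _]; last first.
    move/eqP: s00; rewrite psumr_eq0 // => /allP/(_ i (mem_index_enum _))/eqP ->.
    by rewrite scale0r.
  by rewrite lmax s00 subr0 scale1r.
have -> : \sum_(i < m.+1) l (widen_ord (leqnSn m.+1) i) *: c (widen_ord (leqnSn m.+1) i)
    = s *: \sum_(i < m.+1)
             (l (widen_ord (leqnSn m.+1) i) / s) *: c (widen_ord (leqnSn m.+1) i).
  by rewrite scaler_sumr; apply: eq_bigr => i _; rewrite scalerA mulrC divfK.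
rewrite lmax; apply: cC => //; last by rewrite s0 -l1 lerDl l0.
apply: (IH (fun i => l _ / s) (fun i => c _)) => [i||i] //; first exact: divr_ge0.
by rewrite -mulr_suml mulfV.
Qed.

End Convex.

Section Separation.
Variable R : realType.

Lemma continuous_sum (U : topologicalType) (I : Type) (s : seq I) (F : I -> U -> R) :
  (forall i, continuous (F i)) -> continuous (fun x => \sum_(i <- s) F i x).
Proof.
move=> Fc; elim: s => [|a s IH].
  rewrite (_ : (fun x => _) = cst 0); first exact: cst_continuous.
  by apply/funext => x; rewrite big_nil.
rewrite (_ : (fun x => _) = F a \+ (fun x => \sum_(i <- s) F i x)).
  by move=> x; apply: continuousD; [exact: Fc | exact: IH].
by apply/funext => x; rewrite big_cons.
Qed.

Definition dotv n (p c : 'rV[R]_n) : R := \sum_j p 0 j * c 0 j.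

Lemma dotvC n (p c : 'rV[R]_n) : dotv p c = dotv c p.
Proof. by apply: eq_bigr => j _; rewrite mulrC. Qed.

Lemma dotvZl n a (p c : 'rV[R]_n) : dotv (a *: p) c = a * dotv p c.
Proof. by rewrite /dotv mulr_sumr; apply: eq_bigr => j _; rewrite mxE mulrA. Qed.

Lemma dotv0l n (c : 'rV[R]_n) : dotv 0 c = 0.
Proof. by rewrite /dotv big1 // => j _; rewrite mxE mul0r. Qed.

Lemma dotv_continuous n (c : 'rV[R]_n) : continuous (fun p : 'rV[R]_n => dotv p c).
Proof.
apply: continuous_sum => j x.
by apply: continuousM; [exact: coord_continuous | exact: cst_continuous].
Qed.

Lemma dotvv_continuous n : continuous (fun p : 'rV[R]_n => dotv p p).
Proof. by apply: continuous_sum => j x; apply: continuousM; exact: coord_continuous. Qed.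

Lemma dotvv_gt0 n (p : 'rV[R]_n) : p != 0 -> 0 < dotv p p.
Proof.
move=> p0; rewrite lt_def sumr_ge0 ?andbT => [|j _]; last by rewrite -expr2 sqr_ge0.
apply: contra p0; rewrite psumr_eq0 => [/allP pj0|j _]; last by rewrite -expr2 sqr_ge0.
apply/eqP/rowP => j; rewrite !mxE.
by have := pj0 j (mem_index_enum _); rewrite mulf_eq0 orbb => /eqP.
Qed.

Lemma min_dotvv_le_dotv n (K : set 'rV[R]_n) (p c : 'rV[R]_n) :
  convex_set K -> K p -> K c -> (forall q, K q -> dotv p p <= dotv q q) ->
  dotv p p <= dotv p c.
Proof.
move=> /convex_setP cK Kp Kc pmin.
pose b := dotv p (c - p); pose e := dotv (c - p) (c - p).
have e0 : 0 <= e by apply: sumr_ge0 => j _; rewrite -expr2 sqr_ge0.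
have segment t : dotv (t *: c + (1 - t) *: p) (t *: c + (1 - t) *: p)
    = dotv p p + t * (2 * b + t * e).
  rewrite /b /e /dotv !mulr_sumr -big_split /= mulr_sumr -big_split /=.
  by apply: eq_bigr => j _; rewrite !mxE; ring.
have b_small t : 0 < t <= 1 -> 0 <= 2 * b + t * e.
  move=> /andP[t0 t1]; rewrite -(pmulr_rge0 _ t0) -(lerD2l (dotv p p)) addr0 -segment.
  by apply/pmin/cK => //; rewrite ltW.
suff b0 : 0 <= b.
  rewrite -subr_ge0 (_ : _ - _ = b) // /b /dotv -sumrB.
  by apply: eq_bigr => j _; rewrite !mxE; ring.
(* for b < 0 the choice t = - b / (e - b) makes 2 b + t e negative *)
rewrite leNgt; apply/negP => b_neg.
have eb0 : 0 < e - b by lra.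
set t := - b / (e - b).
have te : t * (e - b) = - b by rewrite /t divfK // gt_eqF.
have t0 : 0 < t by rewrite /t divr_gt0 // oppr_gt0.
have t1 : t <= 1 by rewrite /t ler_pdivrMr // mul1r; lra.
have := b_small t; rewrite t0 t1 => /(_ isT); nra.
Qed.

Definition simplex m : set 'rV[R]_m :=
  [set l | (forall k, 0 <= l 0 k) /\ \sum_k l 0 k = 1].
Arguments simplex : clear implicits.

Lemma simplex_delta m (i : 'I_m) : simplex m (delta_mx 0 i).
Proof.
split=> [k|]; first by rewrite mxE ler0n.
by rewrite (bigD1 i) //= mxE !eqxx big1 ?addr0 // => k /negbTE ki; rewrite mxE ki.
Qed.

Lemma simplex_compact m : compact (simplex m).
Proof.
have closed_simplex : closed (simplex m).
  rewrite (_ : simplex m = \bigcap_(k in setT) [set l | 0 <= l 0 k]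
      `&` [set l | \sum_k l 0 k = 1]); last first.
    by apply/seteqP; split=> l /= [l0 l1]; split=> // k; [move=> _|]; exact: l0.
  apply: closedI.
    apply: closed_bigI => k _.
    apply: (@preimage_closed _ _ (fun l : 'rV[R]_m => l 0 k) [set x | 0 <= x]).
      by move=> l _; exact: coord_continuous.
    exact: closed_ge.
  apply: (@preimage_closed _ _ (fun l : 'rV[R]_m => \sum_k l 0 k) [set x | x = 1]).
    by move=> l _; apply: continuous_sum => k; exact: coord_continuous.
  exact: closed_eq.
apply: (subclosed_compact closed_simplex).
  by apply: (@rV_compact _ _ (fun=> `[(0:R), 1]%classic)) => _; exact: segment_compact.
move=> l [l0 l1] k /=; rewrite in_itv /= l0 /= -l1 (bigD1 k) //= lerDl.
exact: sumr_ge0.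
Qed.

Lemma convex_separation_fin n m (C : set 'rV[R]_n) (c : 'I_m.+1 -> 'rV[R]_n) :
  convex_set C -> ~ C 0 -> (forall i, C (c i)) -> exists p, forall i, 0 < dotv p (c i).
Proof.
move=> cC nC Cc.
pose hull (l : 'rV[R]_m.+1) := \sum_k l 0 k *: c k.
have hull_cont j : continuous (fun l => hull l 0 j).
  rewrite (_ : (fun l => _) = fun l : 'rV[R]_m.+1 => \sum_k l 0 k * c k 0 j).
    apply: continuous_sum => k x.
    by apply: continuousM; [exact: coord_continuous | exact: cst_continuous].
  by apply/funext => l; rewrite summxE; apply: eq_bigr => k _; rewrite mxE.
have hull_delta i : hull (delta_mx 0 i) = c i.
  rewrite /hull (bigD1 i) //= mxE !eqxx scale1r big1 ?addr0 // => k /negbTE ki.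
  by rewrite mxE ki scale0r.
have hull_convex : convex_set (hull @` simplex m.+1).
  apply/convex_setP => _ _ t [l1 [l1_ge0 l1_sum] <-] [l2 [l2_ge0 l2_sum] <-] /andP[t0 t1].
  exists (t *: l1 + (1 - t) *: l2).
    split=> [k|]; first by rewrite !mxE addr_ge0 ?mulr_ge0 ?subr_ge0.
    under eq_bigr do rewrite !mxE.
    by rewrite big_split /= -!mulr_sumr l1_sum l2_sum !mulr1 subrKC.
  rewrite /hull !scaler_sumr -big_split /=; apply: eq_bigr => k _.
  by rewrite !scalerA -scalerDl !mxE.
have norm_cont : continuous (fun l => dotv (hull l) (hull l)).
  by apply: continuous_sum => j x; apply: continuousM; exact: hull_cont.
have [l0 /set_mem l0_simplex l0_min] := EVT_min_rV (ex_intro _ _ (simplex_delta ord0))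
  (@simplex_compact m.+1) (continuous_subspaceT norm_cont).
have p_min q : (hull @` simplex m.+1) q -> dotv (hull l0) (hull l0) <= dotv q q.
  by move=> [l l_simplex <-]; apply: l0_min; rewrite inE.
have p_gt0 : 0 < dotv (hull l0) (hull l0).
  apply: dotvv_gt0; apply: contra_notN nC => /eqP <-.
  by case: l0_simplex => l0_ge0 l0_sum; apply: convex_set_comb.
exists (hull l0) => i; apply: (lt_le_trans p_gt0).
apply: (min_dotvv_le_dotv hull_convex _ _ p_min); first by exists l0.
by rewrite -hull_delta; exists (delta_mx 0 i) => //; exact: simplex_delta.
Qed.

Definition unit_sphere n : set 'rV[R]_n := [set p | dotv p p = 1].
Arguments unit_sphere : clear implicits.

Lemma unit_sphere_compact n : compact (unit_sphere n).
Proof.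
have closed_sphere : closed (unit_sphere n).
  apply: (@preimage_closed _ _ (fun p : 'rV[R]_n => dotv p p) [set x | x = 1]).
    by move=> p _; exact: dotvv_continuous.
  exact: closed_eq.
apply: (subclosed_compact closed_sphere).
  by apply: (@rV_compact _ _ (fun=> `[(-1:R), 1]%classic)) => _; exact: segment_compact.
move=> p p1 k /=; rewrite in_itv /= -ler_norml -(expr_le1 (n := 2)) // -p1 /dotv.
rewrite (bigD1 k) //= real_normK ?num_real // expr2 lerDl.
by apply: sumr_ge0 => j _; rewrite -expr2 sqr_ge0.
Qed.

Lemma delta_mx_neq0 n (j : 'I_n) : delta_mx 0 j != 0 :> 'rV[R]_n.
Proof. by apply/eqP => /matrixP /(_ 0 j); rewrite !mxE !eqxx => /eqP; rewrite oner_eq0. Qed.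

Lemma unit_sphere_neq0 n (p : 'rV[R]_n) : unit_sphere n p -> p != 0.
Proof. by apply: contraPneq => -> /eqP; rewrite dotv0l eq_sym oner_eq0. Qed.

Lemma convex_separation_seq n (C : set 'rV[R]_n.+1) (s : seq 'rV[R]_n.+1) :
  convex_set C -> ~ C 0 -> (forall c, c \in s -> C c) ->
  exists2 p, unit_sphere n.+1 p & forall c, c \in s -> 0 <= dotv p c.
Proof.
move=> cC nC; case: s => [_|a s Cs].
  exists (delta_mx 0 ord0) => //.
  rewrite /unit_sphere /= /dotv (bigD1 ord0) //= !mxE eqxx mul1r big1 ?addr0 // => j /negbTE j0.
  by rewrite mxE j0 mul0r.
have [|p p_pos] :=
  @convex_separation_fin _ _ C (fun k : 'I_(size s).+1 => nth 0 (a :: s) k) cC nC.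
  by move=> k; apply: Cs; exact: mem_nth.
have p_neq0 : p != 0.
  by apply: contraTneq (p_pos ord0) => ->; rewrite dotv0l ltxx.
have pp_gt0 := dotvv_gt0 p_neq0.
exists ((Num.sqrt (dotv p p))^-1 *: p).
  rewrite /unit_sphere /= dotvZl dotvC dotvZl mulrA -expr2 exprVn sqr_sqrtr ?ltW //.
  by rewrite mulVf // gt_eqF.
move=> c cs; rewrite dotvZl mulr_ge0 ?invr_ge0 ?sqrtr_ge0 //.
have ci : (index c (a :: s) < (size s).+1)%N by rewrite index_mem.
by rewrite -(nth_index 0 cs) ltW // (p_pos (Ordinal ci)).
Qed.

Theorem convex_separation n (C : set 'rV[R]_n) : (0 < n)%N -> convex_set C -> ~ C 0 ->
  exists2 p, p != 0 & forall c, C c -> 0 <= dotv p c.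
Proof.
case: n C => // n C _ cC nC; have [[c0 Cc0]|C0] := pselect (C !=set0); last first.
  by exists (delta_mx 0 ord0) => [|c Cc]; [exact: delta_mx_neq0 | case: C0; exists c].
pose F c := unit_sphere n.+1 `&` [set p | 0 <= dotv p c].
have F_closed : closed_fam_of (unit_sphere n.+1) C F.
  exists (fun c => [set p | 0 <= dotv p c]) => // c _.
  apply: (@preimage_closed _ _ (fun p => dotv p c) [set x | 0 <= x]).
    by move=> p _; exact: dotv_continuous.
  exact: closed_ge.
have F_finI : finI C F.
  move=> D DC; have [|p p1 pD] := convex_separation_seq (s := finmap.enum_fset D) cC nC.
    by move=> c cD; apply/set_mem/DC.
  by exists p => c cD; split => //; exact: pD.
have := @unit_sphere_compact n.+1; rewrite compact_In0 => /(_ _ C F F_closed F_finI) [p pF].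
exists p => [|c Cc]; last by case: (pF c Cc).
by case: (pF c0 Cc0) => + _; exact: unit_sphere_neq0.
Qed.

End Separation.

Notation Rintegrable mu f := (mu.-integrable setT (EFin \o f)).

Section RealIntegral.
Context d (T : measurableType d) (R : realType) (mu : {measure set T -> \bar R}).
Implicit Types f g : T -> R.

Lemma EFin_Rintegral f : Rintegrable mu f ->
  (\int[mu]_x f x)%:E = (\int[mu]_x (f x)%:E)%E.
Proof. by move=> h; rewrite fineK //; exact: integrable_fin_num. Qed.

Lemma eq_Rintegrable f g : f =1 g -> Rintegrable mu f -> Rintegrable mu g.
Proof. by move=> fg; apply: eq_integrable => // x _ /=; rewrite fg. Qed.

Lemma RintegrableD f g : Rintegrable mu f -> Rintegrable mu g ->
  Rintegrable mu (fun x => f x + g x).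
Proof. by move=> hf hg; apply: eq_integrable (integrableD _ hf hg) => // x _. Qed.

Lemma RintegrableZl k f : Rintegrable mu f -> Rintegrable mu (fun x => k * f x).
Proof. by move=> hf; apply: eq_integrable (integrableZl _ k hf) => // x _. Qed.

Lemma RintegrableB f g : Rintegrable mu f -> Rintegrable mu g ->
  Rintegrable mu (fun x => f x - g x).
Proof. by move=> hf hg; apply: eq_integrable (integrableB _ hf hg) => // x _. Qed.

Lemma RintegrableN f : Rintegrable mu f -> Rintegrable mu (fun x => - f x).
Proof. by move=> hf; apply: eq_Rintegrable (RintegrableZl (-1) hf) => x; rewrite mulN1r. Qed.

Lemma RintegralN f : Rintegrable mu f -> \int[mu]_x (- f x) = - \int[mu]_x f x.
Proof.
by move=> hf; rewrite -mulN1r -RintegralZl //; apply: eq_Rintegral => x _; rewrite mulN1r.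
Qed.

Lemma Rintegrable_sum (I : Type) (s : seq I) (F : I -> T -> R) :
  (forall i, Rintegrable mu (F i)) -> Rintegrable mu (fun x => \sum_(i <- s) F i x).
Proof.
move=> hF; elim: s => [|a s IH].
  by apply: eq_integrable (integrable0 mu setT) => // x _; rewrite /= big_nil.
by apply: eq_Rintegrable (RintegrableD (hF a) IH) => x; rewrite big_cons.
Qed.

Lemma Rintegral_sum (I : Type) (s : seq I) (F : I -> T -> R) :
  (forall i, Rintegrable mu (F i)) ->
  \int[mu]_x (\sum_(i <- s) F i x) = \sum_(i <- s) \int[mu]_x F i x.
Proof.
move=> hF; elim: s => [|a s IH].
  by under eq_Rintegral do rewrite big_nil; rewrite big_nil Rintegral_cst // mul0r.
under eq_Rintegral do rewrite big_cons.
by rewrite RintegralD //; [rewrite IH big_cons | exact: Rintegrable_sum].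
Qed.

Lemma ae_eq_Rintegral f g : measurable_fun setT f -> measurable_fun setT g ->
  {ae mu, forall x, f x = g x} -> \int[mu]_x f x = \int[mu]_x g x.
Proof.
move=> mf mg fg; congr fine; apply: ae_eq_integral => //.
- by apply/measurable_EFinP.
- by apply/measurable_EFinP.
by apply: filterS fg => x /= -> _.
Qed.

Lemma ae_Rintegral_ge0 f : measurable_fun setT f -> {ae mu, forall x, 0 <= f x} ->
  0 <= \int[mu]_x f x.
Proof.
move=> mf f0; rewrite (@ae_eq_Rintegral _ (fun x => Num.max (f x) 0)) //.
- by apply: Rintegral_ge0 => x _; rewrite le_max lexx orbT.
- exact: measurable_maxr.
- by apply: filterS f0 => x /max_idPl.
Qed.

Lemma ae_le_Rintegral f g : Rintegrable mu f -> Rintegrable mu g ->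
  {ae mu, forall x, f x <= g x} -> \int[mu]_x f x <= \int[mu]_x g x.
Proof.
move=> hf hg fg; rewrite -subr_ge0 -RintegralB //; apply: ae_Rintegral_ge0.
  by apply/measurable_EFinP; exact: measurable_int (RintegrableB hg hf).
by apply: filterS fg => x; rewrite subr_ge0.
Qed.

Lemma ae_eq0_Rintegral_eq0 f : Rintegrable mu f -> {ae mu, forall x, 0 <= f x} ->
  \int[mu]_x f x = 0 -> {ae mu, forall x, f x = 0}.
Proof.
move=> hf f0 intf0; have mf := measurable_int _ hf.
have : ae_eq mu setT (EFin \o f) (cst 0%E).
  apply/(ae_eq_integral_abs mu measurableT mf).
  rewrite (ae_eq_integral (EFin \o f)) //.
  - by rewrite -EFin_Rintegral // intf0.
  - exact: measurableT_comp.
  by apply: filterS f0 => x fx _ /=; rewrite ger0_norm.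
by apply: filterS => x /(_ I) [].
Qed.

Lemma Rintegrable_indicM (A : set T) (X : T -> R) : measurable A -> Rintegrable mu X ->
  Rintegrable mu (fun x => \1_A x * X x).
Proof.
move=> mA iX; have /measurable_EFinP mX := measurable_int _ iX.
apply: le_integrable iX => //.
  by apply/measurable_EFinP; apply: measurable_funM => //; exact: measurable_indic.
move=> x _ /=; rewrite lee_fin normrM indicE.
by case: (_ \in _); rewrite ?normr1 ?normr0 ?mul1r ?mul0r.
Qed.

Lemma ae_eq0_Rintegral_mul_eq0 (Z X : T -> R) : {ae mu, forall x, 0 < Z x} ->
  {ae mu, forall x, 0 <= X x} -> Rintegrable mu (fun x => Z x * X x) ->
  \int[mu]_x (Z x * X x) = 0 -> {ae mu, forall x, X x = 0}.
Proof.
move=> Z_gt0 X_ge0 iZX /(ae_eq0_Rintegral_eq0 iZX).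
have ZX_ge0 : {ae mu, forall x, 0 <= Z x * X x}.
  by apply: filterS2 Z_gt0 X_ge0 => x Zx Xx; rewrite mulr_ge0 // ltW.
move=> /(_ ZX_ge0); apply: filterS2 Z_gt0 => x /gt_eqF Zx /eqP.
by rewrite mulf_eq0 Zx => /eqP.
Qed.

Lemma Rintegral_indic_lt0 (X : T -> R) : Rintegrable mu X ->
  mu [set x | X x < 0] != 0%E -> \int[mu]_x (\1_[set x | X x < 0] x * X x) < 0.
Proof.
set A := [set x | X x < 0] => iX muA.
have /measurable_EFinP mX := measurable_int _ iX.
have mA : measurable A by rewrite -[A]setTI; exact: mX (measurable_itv `]-oo, 0[).
pose g x := \1_A x * X x.
have g_le0 x : g x <= 0.
  by rewrite /g indicE; case: (boolP (x \in A)) => [/set_mem/ltW|_]; rewrite ?mul1r ?mul0r.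
have ig : Rintegrable mu g := Rintegrable_indicM mA iX.
rewrite -oppr_gt0 -RintegralN // lt_def Rintegral_ge0 ?andbT => [|x _]; last first.
  by rewrite oppr_ge0; exact: g_le0.
have ng_ge0 : {ae mu, forall x, 0 <= - g x} by apply: nearW => x; rewrite oppr_ge0.
apply: contra muA => /eqP /(ae_eq0_Rintegral_eq0 (RintegrableN ig) ng_ge0) gA.
apply/eqP/(measure_negligible mA); apply: negligibleS gA => x Ax /=; apply/eqP.
by rewrite oppr_eq0 /g indicE mem_set // mul1r lt_eqF.
Qed.

End RealIntegral.

Section Densities.
Context {d : measure_display} {T : measurableType d} {R : realType}.
Variable P : probability T R.
Implicit Types (X Z : T -> R).

Lemma Rintegral_cst_probability (k : R) : \int[P]_x k = k.
Proof. by rewrite /Rintegral integral_cst //= probability_setT mule1. Qed.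

Lemma EmZ_Rintegral Z X : measurable_fun setT Z -> measurable_fun setT X ->
  Rintegrable P (fun x => Z x * X x) -> EmZ P Z X = (- \int[P]_x (Z x * X x))%:E.
Proof.
move=> mZ mX iZX.
have part_integrable (Y : T -> R) : measurable_fun setT Y ->
    (forall x, 0 <= Y x <= `|X x|) -> Rintegrable P (fun x => Z x * Y x).
  move=> mY YX; apply: le_integrable iZX => //.
    by apply/measurable_EFinP; exact: measurable_funM.
  move=> x _ /=; rewrite lee_fin !normrM ler_wpM2l //.
  by have /andP[Y0 YXx] := YX x; rewrite ger0_norm.
have posneg x : X^\+ x + X^\- x = `|X x|.
  by have := congr1 (fun f => f x) (funrposDneg X).
have iN : Rintegrable P (fun x => Z x * X^\- x).
  apply: part_integrable; first exact: measurable_funrneg.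
  by move=> x; rewrite funrneg_ge0 -posneg lerDr funrpos_ge0.
have iP : Rintegrable P (fun x => Z x * X^\+ x).
  apply: part_integrable; first exact: measurable_funrpos.
  by move=> x; rewrite funrpos_ge0 -posneg lerDl funrneg_ge0.
rewrite /EmZ -[I in (I == _)]/(\int[P]_x (Z x * X^\- x)%:E)%E -EFin_Rintegral //=.
rewrite -[I in (_ - I)%E]/(\int[P]_x (Z x * X^\+ x)%:E)%E -EFin_Rintegral //.
rewrite -EFinB -RintegralB // -RintegralN //; congr EFin; apply: eq_Rintegral => x _.
by rewrite -mulrBr -mulrN; congr (_ * _); rewrite -[in RHS](funrposBneg X) opprB.
Qed.

Lemma fine_probability_gt0 A : measurable A -> P A != 0%E -> 0 < fine (P A).
Proof.
move=> mA PA0; apply: fine_gt0; rewrite lt0e PA0 measure_ge0 /=.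
exact: le_lt_trans (probability_le1 P mA) (ltry 1).
Qed.

Definition cond_density (A : set T) (x : T) : R := (fine (P A))^-1 * \1_A x.

Lemma cond_density_Dset A : measurable A -> P A != 0%E -> Dset P (cond_density A).
Proof.
move=> mA PA0; have pA_gt0 := fine_probability_gt0 mA PA0.
split; first exact/RintegrableZl/integrable_indic.
split; first by apply: nearW => x; rewrite mulr_ge0 ?invr_ge0 ?(ltW pA_gt0) // indicE ler0n.
rewrite -EFin_Rintegral; last exact/RintegrableZl/integrable_indic.
rewrite RintegralZl //; last exact: integrable_indic.
by rewrite /Rintegral integral_indic // setIT mulVf // gt_eqF.
Qed.

Lemma cond_density_ess_bounded A : ess_bounded P (cond_density A).
Proof.
exists `|(fine (P A))^-1|; apply: nearW => x; rewrite /cond_density normrM indicE.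
by case: (_ \in _); rewrite ?normr1 ?mulr1 ?normr0 ?mulr0.
Qed.

Lemma Rintegral_mix_ge0 (l : R) Z Zt X : 0 < l < 1 ->
  Rintegrable P (fun x => mix l Z Zt x * X x) -> Rintegrable P (fun x => Zt x * X x) ->
  0 <= \int[P]_x (mix l Z Zt x * X x) -> \int[P]_x (Zt x * X x) = 0 ->
  Rintegrable P (fun x => Z x * X x) /\ 0 <= \int[P]_x (Z x * X x).
Proof.
move=> /andP[l0 l1] imix iZtX mix_ge0 ZtX0.
have ZXE x : Z x * X x = l^-1 * (mix l Z Zt x * X x - (1 - l) * (Zt x * X x)).
  by rewrite /mix; field; rewrite gt_eqF.
have iZX : Rintegrable P (fun x => Z x * X x).
  by apply: eq_Rintegrable (RintegrableZl _ (RintegrableB imix (RintegrableZl _ iZtX))) => x.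
split => //; rewrite (eq_Rintegral _ (fun x _ => ZXE x)) RintegralZl //; last first.
  exact: RintegrableB imix (RintegrableZl _ iZtX).
rewrite RintegralB //; last exact: RintegrableZl.
by rewrite RintegralZl // ZtX0 mulr0 subr0 mulr_ge0 // invr_ge0 ltW.
Qed.

Lemma Rintegral_le_close (e : R) Z Z' X : Rintegrable P X ->
  Rintegrable P (fun x => Z x * X x) -> Rintegrable P (fun x => Z' x * X x) ->
  {ae P, forall x, `|Z x - Z' x| <= e} ->
  \int[P]_x (Z' x * X x) <= \int[P]_x (Z x * X x) + e * \int[P]_x `|X x|.
Proof.
move=> iX iZX iZ'X ZZ'.
have iaX : Rintegrable P (fun x => `|X x|) := integrable_norm iX.
rewrite -RintegralZl // -RintegralD //; last exact: RintegrableZl.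
apply: ae_le_Rintegral => //; first exact/RintegrableD/RintegrableZl.
apply: filterS ZZ' => x ZZ'x; rewrite -lerBlDl -mulrBl.
apply: le_trans (ler_norm _) _; rewrite normrM distrC ler_wpM2r //.
Qed.

Lemma mix_dense_ae_ge0 (Q E : set (T -> R)) Zt X : Rintegrable P X -> Linf_dense P E ->
  (forall Z, E Z -> exists l : R, 0 < l < 1 /\ Q (mix l Z Zt)) ->
  (forall Z, Q Z -> Rintegrable P (fun x => Z x * X x) /\ 0 <= \int[P]_x (Z x * X x)) ->
  Rintegrable P (fun x => Zt x * X x) -> \int[P]_x (Zt x * X x) = 0 ->
  {ae P, forall x, 0 <= X x}.
Proof.
move=> iX [_ E_dense] E_mix QX iZtX ZtX0.
have /measurable_EFinP mX := measurable_int _ iX.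
set A := [set x | X x < 0].
have mA : measurable A by rewrite -[A]setTI; exact: mX (measurable_itv `]-oo, 0[).
have [PA0|PA_neq0] := eqVneq (P A) 0%E.
  by exists A; split => // x /negP; rewrite -ltNge.
pose Z0 := cond_density A.
have iZ0X : Rintegrable P (fun x => Z0 x * X x).
  apply: eq_Rintegrable (RintegrableZl _ (Rintegrable_indicM mA iX)) => x.
  by rewrite /Z0 /cond_density mulrA.
have Z0X_lt0 : \int[P]_x (Z0 x * X x) < 0.
  rewrite (eq_Rintegral _ (fun x _ => esym (mulrA _ _ _))) RintegralZl //; last first.
    exact: Rintegrable_indicM.
  by rewrite pmulr_rlt0 ?Rintegral_indic_lt0 // invr_gt0 fine_probability_gt0.
pose K := \int[P]_x `|X x|.
have K0 : 0 <= K by apply: Rintegral_ge0.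
pose c := - \int[P]_x (Z0 x * X x).
(* e K < c / 2, so densities e-close to Z0 still have a negative pairing with X *)
pose e := c / (2 * (K + 1)).
have e0 : 0 < e by rewrite divr_gt0 ?oppr_gt0 //; lra.
have eK : e * (2 * (K + 1)) = c by rewrite divfK // gt_eqF //; lra.
have [Z' EZ' Z0Z'] := E_dense Z0 (cond_density_Dset mA PA_neq0)
  (cond_density_ess_bounded A) e e0.
have [l [l01 Qmix]] := E_mix Z' EZ'.
have [iZ'X Z'X_ge0] := Rintegral_mix_ge0 l01 (QX _ Qmix).1 iZtX (QX _ Qmix).2 ZtX0.
have := Rintegral_le_close iX iZ0X iZ'X Z0Z'; rewrite -/K -[I in I + _]opprK -/c.
by move=> Z'X_le; exfalso; nra.
Qed.

End Densities.

Section Qmax.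
Context {d : measure_display} {T : measurableType d} {R : realType}.
Variables (P : probability T R) (Q : set (T -> R)).
Hypothesis QD : Q `<=` Dset P.
Hypothesis Q_convex :
  forall Z1 Z2 (l : R), Q Z1 -> Q Z2 -> 0 <= l <= 1 -> Q (mix l Z1 Z2).

Lemma Qmax_MIX : condMIX Q (Qmax P Q).
Proof.
move=> Z Zt l QZ [QZt [Zt_gt0 [E [E_dense E_mix]]]] /andP[l0 l1].
split; first by apply: Q_convex => //; rewrite !ltW.
split.
  have [_ [Z_ge0 _]] := QD QZ.
  by apply: filterS2 Z_ge0 Zt_gt0 => x Zx Ztx; rewrite /mix; nra.
exists E; split => // Z' EZ'.
have [k [/andP[k0 k1] QY]] := E_mix Z' EZ'.
(* mix k' Z' (mix l Z Zt) is the a-mix of mix k Z' Zt and of the point mix b Z Zt *)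
pose k' := k * (1 - l) / 2; pose a := (1 - l) / 2.
pose b := (2 - k * (1 - l)) * l / (1 + l).
exists k'; split.
  apply/andP; split; rewrite /k'; first by rewrite divr_gt0 // mulr_gt0 // subr_gt0.
  by rewrite ltr_pdivrMr //; nra.
have QU : Q (mix b Z Zt).
  apply: Q_convex => //; apply/andP; split; first by rewrite /b divr_ge0 //; nra.
  have klk : 0 <= k * l * (1 - l) by rewrite !mulr_ge0 ?subr_ge0 // ?ltW.
  by rewrite /b ler_pdivrMr; nra.
have a01 : 0 <= a <= 1 by apply/andP; split; rewrite /a; lra.
have := Q_convex QY QU a01; congr Q; apply: funext => x; rewrite /mix /a /k' /b.
by field; rewrite gt_eqF //; lra.
Qed.

Lemma Qmax_POS_MIX_INT : Qmax P Q `<=` Q /\ condPOS P (Qmax P Q) /\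
  condMIX Q (Qmax P Q) /\ condINT P Q (Qmax P Q).
Proof.
split; first by move=> Z [].
split; first by move=> Z [_ []].
by split; [exact: Qmax_MIX | move=> Z [_ [_ INT]]].
Qed.

End Qmax.

Section Market.
Context {d0 : measure_display} {T : measurableType d0} {R : realType}.
Variables (P : probability T R) (d : nat) (r : R) (S0 : 'I_d -> R)
  (S1 : 'I_d -> T -> R) (Q : set (T -> R)).
Hypothesis QD : Q `<=` Dset P.
Hypothesis Q1 : Q (fun _ => 1).
Hypothesis QI : condI P (ret S0 S1) Q.

Local Notation Ret := (ret S0 S1).
Local Notation X pi := (excess r (ret S0 S1) pi).

Definition excess_moment (Z : T -> R) (i : 'I_d) : R := \int[P]_x (Z x * (Ret i x - r)).

Definition excess_pairing (pi : 'I_d -> R) (Z : T -> R) : R :=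
  \sum_i pi i * excess_moment Z i.

Lemma Q_moment_integrable Z i : Q Z -> Rintegrable P (fun x => Z x * (Ret i x - r)).
Proof.
move=> QZ; have [iZ _] := QD QZ.
apply: eq_Rintegrable (RintegrableB (QI i QZ) (RintegrableZl r iZ)) => x.
by rewrite mulrBr [r * _]mulrC.
Qed.

Lemma excess_pairingE Z pi : Q Z ->
  Rintegrable P (fun x => Z x * X pi x) /\
  \int[P]_x (Z x * X pi x) = excess_pairing pi Z.
Proof.
move=> QZ.
have ZXE x : \sum_(i <- index_enum 'I_d) pi i * (Z x * (Ret i x - r)) = Z x * X pi x.
  by rewrite /excess mulr_sumr; apply: eq_bigr => i _; ring.
have iZR i : Rintegrable P (fun x => pi i * (Z x * (Ret i x - r))).
  exact/RintegrableZl/Q_moment_integrable.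
split; first exact: eq_Rintegrable (Rintegrable_sum _ iZR).
rewrite -(eq_Rintegral _ (fun x _ => ZXE x)) Rintegral_sum //.
by apply: eq_bigr => i _; rewrite RintegralZl //; exact: Q_moment_integrable.
Qed.

Lemma Rintegral_excess pi :
  Rintegrable P (X pi) /\ \int[P]_x X pi x = excess_pairing pi (fun _ => 1).
Proof.
have [i1X <-] := excess_pairingE pi Q1.
split; first by apply: eq_Rintegrable i1X => x; rewrite mul1r.
by apply: eq_Rintegral => x _; rewrite mul1r.
Qed.

Lemma mean_excess pi : (\int[P]_x (X pi x)%:E = (excess_pairing pi (fun _ => 1))%:E)%E.
Proof. by have [iX <-] := Rintegral_excess pi; rewrite EFin_Rintegral. Qed.

Lemma EmZ_excess Z pi : Q Z -> EmZ P Z (X pi) = (- excess_pairing pi Z)%:E.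
Proof.
move=> QZ; have [iZX <-] := excess_pairingE pi QZ.
have [[iZ _] [iX _]] := (QD QZ, Rintegral_excess pi).
by apply: EmZ_Rintegral => //; apply/measurable_EFinP;
  [exact: measurable_int _ iZ | exact: measurable_int _ iX].
Qed.

Lemma rho_excess_ge Z pi : Q Z -> ((- excess_pairing pi Z)%:E <= rho P Q (X pi))%E.
Proof. by move=> QZ; rewrite -EmZ_excess //; apply: ereal_sup_ubound; exists Z. Qed.

Lemma rho_excess_le pi (c : R) : (forall Z, Q Z -> - excess_pairing pi Z <= c) ->
  (rho P Q (X pi) <= c%:E)%E.
Proof.
by move=> h; apply: ge_ereal_sup => _ [Z QZ <-]; rewrite EmZ_excess // lee_fin h.
Qed.

Lemma excess_pairingDl pi1 pi2 Z :
  excess_pairing (fun i => pi1 i + pi2 i) Z = excess_pairing pi1 Z + excess_pairing pi2 Z.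
Proof. by rewrite /excess_pairing -big_split; apply: eq_bigr => i _; rewrite mulrDl. Qed.

Lemma excess_moment_mix l Z1 Z2 i : Q Z1 -> Q Z2 ->
  excess_moment (mix l Z1 Z2) i = l * excess_moment Z1 i + (1 - l) * excess_moment Z2 i.
Proof.
move=> QZ1 QZ2; have i1 := Q_moment_integrable i QZ1.
have i2 := Q_moment_integrable i QZ2.
rewrite /excess_moment -!RintegralZl // -RintegralD //; try exact: RintegrableZl.
by apply: eq_Rintegral => x _; rewrite /mix; ring.
Qed.

Lemma excess_pairing_mix pi l Z1 Z2 : Q Z1 -> Q Z2 ->
  excess_pairing pi (mix l Z1 Z2) = l * excess_pairing pi Z1 + (1 - l) * excess_pairing pi Z2.
Proof.
move=> QZ1 QZ2; rewrite /excess_pairing !mulr_sumr -big_split /=; apply: eq_bigr => i _.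
by rewrite excess_moment_mix //; ring.
Qed.

Lemma excess_pairing0 Z : excess_pairing (fun=> 0) Z = 0.
Proof. by rewrite /excess_pairing big1 // => i _; rewrite mul0r. Qed.

Lemma no_rho_arbitrage_of_density Qt : Qt `<=` Q -> condINT P Q Qt ->
  (Qt `&` Pset P r Ret) !=set0 -> ~ rho_arbitrage P Q r Ret.
Proof.
move=> QtQ INT [Zt [QtZt [[_ Zt_mart] Zt_gt0]]]; apply; exists (fun=> 0).
have rho0 : (rho P Q (X (fun=> 0%R)) <= 0%R%:E)%E.
  by apply: rho_excess_le => Z _; rewrite excess_pairing0 oppr0.
split; first by rewrite mean_excess excess_pairing0.
move=> [pi /=]; rewrite !mean_excess excess_pairing0 lee_fin lte_fin.
move=> [m_ge0 [rho_le strict]].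
have QX Z : Q Z -> 0 <= excess_pairing pi Z.
  move=> QZ; have := le_trans (rho_excess_ge pi QZ) (le_trans rho_le rho0).
  by rewrite lee_fin oppr_le0.
have m_gt0 : 0 < excess_pairing pi (fun _ => 1).
  case: strict => // rho_lt; rewrite lt_def m_ge0 andbT; apply/eqP => m0.
  have := lt_le_trans (le_lt_trans (rho_excess_ge pi Q1) rho_lt) rho0.
  by rewrite m0 oppr0 ltxx.
have QZt := QtQ _ QtZt; have [iZtX ZtXE] := excess_pairingE pi QZt.
have ZtX0 : \int[P]_x (Zt x * X pi x) = 0.
  rewrite ZtXE /excess_pairing big1 // => i _.
  by rewrite /excess_moment /Rintegral (Zt_mart i).2 mulr0.
have [iX XE] := Rintegral_excess pi.
have [E [E_dense E_mix]] := INT Zt QtZt.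
have QZX Z : Q Z -> Rintegrable P (fun x => Z x * X pi x) /\ 0 <= \int[P]_x (Z x * X pi x).
  by move=> QZ; have [iZX ->] := excess_pairingE pi QZ; split => //; exact: QX.
have X_ge0 := mix_dense_ae_ge0 iX E_dense E_mix QZX iZtX ZtX0.
have X0 := ae_eq0_Rintegral_mul_eq0 Zt_gt0 X_ge0 iZtX ZtX0.
move: m_gt0; rewrite -XE (ae_eq_Rintegral _ (measurable_cst _) X0).
  by rewrite Rintegral_cst_probability ltxx.
by apply/measurable_EFinP; exact: measurable_int _ iX.
Qed.

Lemma efficient_excess_pairing : ~ rho_arbitrage P Q r Ret ->
  forall pi, 0 < excess_pairing pi (fun _ => 1) -> exists2 Z, Q Z & excess_pairing pi Z < 0.
Proof.
move=> /contrapT [pi0 [_ pi0_eff]] pi m_gt0; apply: contrapT => no_Z.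
have QX Z : Q Z -> 0 <= excess_pairing pi Z.
  by move=> QZ; rewrite leNgt; apply/negP => ?; apply: no_Z; exists Z.
apply: pi0_eff; exists (fun i => pi0 i + pi i) => /=.
rewrite !mean_excess excess_pairingDl lee_fin lte_fin ltrDl lerDl ltW //.
split=> //; split; last by left.
apply: ge_ereal_sup => _ [Z QZ <-]; rewrite EmZ_excess // excess_pairingDl.
apply: le_trans (rho_excess_ge pi0 QZ); rewrite lee_fin lerN2 lerDl; exact: QX.
Qed.

Lemma excess_pairing_ge0_extend Qt Zt pi : Qt `<=` Q -> condMIX Q Qt -> Qt Zt ->
  (forall Z, Qt Z -> 0 <= excess_pairing pi Z) -> forall Z, Q Z -> 0 <= excess_pairing pi Z.
Proof.
move=> QtQ MIX QtZt Qt_ge0 Z QZ; rewrite leNgt; apply/negP => Z_lt0.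
pose a := - excess_pairing pi Z; pose b := excess_pairing pi Zt.
have a0 : 0 < a by rewrite oppr_gt0.
have b0 : 0 <= b := Qt_ge0 _ QtZt.
(* close enough to Z, the mixture with Zt still has a negative pairing *)
pose l := (b + 1) / (a + b + 1).
have l0 : 0 < l by rewrite divr_gt0 //; lra.
have l1 : l < 1 by rewrite ltr_pdivrMr; lra.
have := Qt_ge0 _ (MIX _ _ l QZ QtZt (ltac:(by rewrite l0 l1))).
have lE : l * (a + b + 1) = b + 1 by rewrite divfK // gt_eqF //; lra.
rewrite excess_pairing_mix //; last exact: QtQ.
by rewrite -[excess_pairing pi Z]opprK -/a -/b; nra.
Qed.

Lemma Pirho0_of_excess_pairing_ge0 pi : (forall Z, Q Z -> 0 <= excess_pairing pi Z) ->
  excess_pairing pi (fun _ => 1) = 0 -> Pirho0 P Q r Ret pi.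
Proof.
move=> Q_ge0 m0; have rho_le0 : (rho P Q (X pi) <= 0%R%:E)%E.
  by apply: rho_excess_le => Z QZ; rewrite oppr_le0; exact: Q_ge0.
split; first by rewrite /Pi0 mean_excess m0.
split; first by apply: le_lt_trans rho_le0 _; rewrite ltey.
move=> pi'; rewrite /Pi0 mean_excess => -[m'0].
by apply: le_trans rho_le0 _; have := rho_excess_ge pi' Q1; rewrite m'0 oppr0.
Qed.

Lemma separating_portfolio Qt : (0 < d)%N -> Qt `<=` Q -> condPOS P Qt -> condMIX Q Qt ->
  Qt `&` Pset P r Ret = set0 ->
  exists2 pi : 'I_d -> R, (exists i, pi i != 0) & forall Z, Qt Z -> 0 <= excess_pairing pi Z.
Proof.
move=> d_gt0 QtQ POS MIX QtP0.
pose m Z := \row_i excess_moment Z i.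
pose V := [set v | exists2 Z, Qt Z & v = m Z].
have V_convex : convex_set V.
  apply/convex_setP => _ _ t [Z1 Qt1 ->] [Z2 Qt2 ->] /andP[t0 t1].
  have [->|t_neq0] := eqVneq t 0; first by rewrite scale0r add0r subr0 scale1r; exists Z2.
  have [->|t_neq1] := eqVneq t 1; first by rewrite scale1r subrr scale0r addr0; exists Z1.
  exists (mix t Z1 Z2).
    by apply: MIX => //; [exact: QtQ | rewrite !lt_def t_neq0 t0 t1 eq_sym t_neq1].
  by apply/rowP => i; rewrite !mxE excess_moment_mix //; exact: QtQ.
have V0 : ~ V 0.
  move=> [Z QtZ /rowP m0]; have QZ := QtQ _ QtZ.
  suff : (Qt `&` Pset P r Ret) Z by rewrite QtP0.
  split=> //; split; last exact: POS; split; first exact: QD.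
  move=> i; have iZi := Q_moment_integrable i QZ; split => //.
  by rewrite -EFin_Rintegral //; have := m0 i; rewrite !mxE /excess_moment => <-.
have [p p_neq0 p_ge0] := convex_separation d_gt0 V_convex V0.
exists (fun i => p 0 i).
  apply: contrapT => /forallNP p0; move/eqP: p_neq0; apply; apply/rowP => i.
  by rewrite mxE; apply/eqP/negPn/negP; exact: p0.
move=> Z QtZ; rewrite (_ : excess_pairing _ Z = dotv p (m Z)); first by apply: p_ge0; exists Z.
by apply: eq_bigr => j _; rewrite mxE.
Qed.

Lemma density_of_no_rho_arbitrage : (0 < d)%N ->
  (forall pi, Pirho0 P Q r Ret pi -> forall i, pi i = 0) -> ~ rho_arbitrage P Q r Ret ->
  forall Qt, Qt `<=` Q -> Qt !=set0 -> condPOS P Qt -> condMIX Q Qt ->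
  (Qt `&` Pset P r Ret) !=set0.
Proof.
move=> d_gt0 Pirho0_trivial NA Qt QtQ [Zt QtZt] POS MIX; apply/set0P/eqP => QtP0.
have [pi [i pi_i] Qt_ge0] := separating_portfolio d_gt0 QtQ POS MIX QtP0.
have Q_ge0 := excess_pairing_ge0_extend QtQ MIX QtZt Qt_ge0.
have [m_gt0|m_le0] := ltrP 0 (excess_pairing pi (fun _ => 1)).
  by have [Z QZ] := efficient_excess_pairing NA m_gt0; rewrite ltNge Q_ge0.
have m0 : excess_pairing pi (fun _ => 1) = 0 by apply/eqP; rewrite eq_le m_le0 Q_ge0.
move/eqP: pi_i; apply.
exact: Pirho0_trivial (Pirho0_of_excess_pairing_ge0 Q_ge0 m0) i.
Qed.

End Market.

Theorem theorem4p20 (d0 : measure_display) (T : measurableType d0)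
  (R : realType) (P : probability T R) (d : nat) (r : R)
  (S0 : 'I_d -> R) (S1 : 'I_d -> T -> R) (Q : set (T -> R)) :
  (* market standing assumptions *)
  -1 < r ->
  (forall i, 0 < S0 i) ->
  (forall i, measurable_fun setT (S1 i)) ->
  nonredundant P r S0 S1 ->
  (forall i, P.-integrable setT (EFin \o ret S0 S1 i)) ->
  (exists i, (\int[P]_x (ret S0 S1 i x)%:E != r%:E)%E) ->
  (* Q is a convex subset of D containing 1 *)
  Q `<=` Dset P ->
  (forall Z1 Z2 (l : R), Q Z1 -> Q Z2 -> 0 <= l <= 1 -> Q (mix l Z1 Z2)) ->
  Q (fun _ => 1) ->
  (* hypotheses of the theorem *)
  condI P (ret S0 S1) Q ->
  (forall pi, Pirho0 P Q r (ret S0 S1) pi <-> forall i, pi i = 0) ->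
  Qmax P Q !=set0 ->
  (~ rho_arbitrage P Q r (ret S0 S1) <->
   exists Qt, Qt `<=` Q /\ Qt !=set0 /\ condPOS P Qt /\ condMIX Q Qt /\ condINT P Q Qt
                /\ (Qt `&` Pset P r (ret S0 S1)) !=set0)
  /\
  ((exists Qt, Qt `<=` Q /\ Qt !=set0 /\ condPOS P Qt /\ condMIX Q Qt /\ condINT P Q Qt
                /\ (Qt `&` Pset P r (ret S0 S1)) !=set0) <->
   (forall Qt, Qt `<=` Q -> Qt !=set0 -> condPOS P Qt -> condMIX Q Qt ->
      condINT P Q Qt -> (Qt `&` Pset P r (ret S0 S1)) !=set0)).
Proof.
move=> _ _ _ _ _ [i0 _] QD Q_convex Q1 QI Pirho0_trivial Qmax_neq0.
have d_gt0 : (0 < d)%N := leq_ltn_trans (leq0n _) (ltn_ord i0).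
have a_c := density_of_no_rho_arbitrage QD Q1 QI d_gt0 (fun pi => (Pirho0_trivial pi).1).
have [QmaxQ [POS [MIX INT]]] := Qmax_POS_MIX_INT QD Q_convex.
split; split.
- by move=> NA; exists (Qmax P Q); do 5 split => //; exact: a_c.
- by move=> [Qt [QtQ [_ [_ [_ [INTt QtP]]]]]]; exact: no_rho_arbitrage_of_density INTt QtP.
- move=> [Qt [QtQ [_ [_ [_ [INTt QtP]]]]]] Qt' Qt'Q Qt'0 POS' MIX' _.
  by apply: a_c => //; exact: no_rho_arbitrage_of_density INTt QtP.
- by move=> c; exists (Qmax P Q); do 5 split => //; exact: c.
Qed.
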